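(* Let $\mathscr{C}=\{C_j\}_{j\in I}$ be a polycylinder packing of $\mathbb{R}^{n+2}$, fix $i\in I$, and let $x$ be a point of the core $a_i$ of $C_i$. Then every vertex of the Dirichlet slice $d_x$ is not closer to the circle $S_x(1)$ than the vertices of a regular hexagon circumscribed about $S_x(1)$; that is, every vertex $v$ of $d_x$ satisfies $|v-x|\ge 2/\sqrt{3}$.
   Context: A polycylinder is a subset of $\mathbb{R}^{n+2}$ isometric to $\mathbb{D}^2\times\mathbb{R}^n$, where $\mathbb{D}^2$ is the closed unit disk. A polycylinder packing of $\mathbb{R}^{n+2}$ is a countable family of polycylinders with mutually disjoint interiors. The core $a_j$ of a polycylinder $C_j$ is the $n$-dimensional affine subspace such that $C_j$ is the set of points at distance at most $1$ from $a_j$. The Dirichlet cell $D_i$ of $C_i$ is the set of points of $\mathbb{R}^{n+2}$ no further from $C_i$ than from any other polycylinder of the packing. For $x\in a_i$, $p_x$ is the $2$-dimensional affine plane through $x$ orthogonal to $a_i$, the Dirichlet slice is $d_x=D_i\cap p_x$, and $S_x(r)$ denotes the circle of radius $r$ in $p_x$ centered at $x$. A vertex of $d_x$ is a boundary point of $d_x$ at which $C_i$ and at least two other polycylinders of the packing are equidistant (i.e. where two boundary arcs of $d_x$ meet). *)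

From HB Require Import structures.
From mathcomp Require Import all_boot all_order all_algebra.
From mathcomp Require Import all_classical all_reals.
Set Implicit Arguments. Unset Strict Implicit. Unset Printing Implicit Defensive.
Import Order.TTheory GRing.Theory Num.Theory.
Local Open Scope ring_scope.
Local Open Scope classical_set_scope.

Section Polycyl.
Variables (R : realType) (n : nat).

Definition enorm (v : 'rV[R]_(n.+2)) : R := Num.sqrt (\sum_i v ord0 i ^+ 2).

(* An n-dimensional affine subspace (the core of a polycylinder):
   base point cpt, and directions = rows of the rank-n matrix cdir. *)
Record core := Core {
  cpt : 'rV[R]_(n.+2);
  cdir : 'M[R]_(n, n.+2);
  cdir_free : row_free cdir }.

Definition affine_set (c : core) : set 'rV[R]_(n.+2) :=
  [set y | exists u : 'rV[R]_n, y = cpt c + u *m cdir c].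

Definition setdist (y : 'rV[R]_(n.+2)) (A : set 'rV[R]_(n.+2)) : R :=
  inf [set enorm (y - z) | z in A].

Definition polycyl (c : core) : set 'rV[R]_(n.+2) :=
  [set y | setdist y (affine_set c) <= 1].

Definition einterior (A : set 'rV[R]_(n.+2)) : set 'rV[R]_(n.+2) :=
  [set y | exists2 e : R, 0 < e & forall z, enorm (z - y) < e -> A z].

Definition packing (I : Type) (c : I -> core) : Prop :=
  (exists f : I -> nat, injective f) /\
  (forall j k : I, j <> k ->
     einterior (polycyl (c j)) `&` einterior (polycyl (c k)) = set0).

Definition dirichlet (I : Type) (c : I -> core) (i : I) : set 'rV[R]_(n.+2) :=
  [set y | forall j, j <> i -> setdist y (polycyl (c i)) <= setdist y (polycyl (c j))].

Definition orth_plane (c : core) (x : 'rV[R]_(n.+2)) : set 'rV[R]_(n.+2) :=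
  [set y | (y - x) *m (cdir c)^T = 0].

Definition slice (I : Type) (c : I -> core) (i : I) (x : 'rV[R]_(n.+2)) :=
  dirichlet c i `&` orth_plane (c i) x.

Definition slice_vertex (I : Type) (c : I -> core) (i : I) (x v : 'rV[R]_(n.+2)) : Prop :=
  [/\ slice c i x v,
      (forall e : R, 0 < e -> exists w, [/\ orth_plane (c i) x w, enorm (w - v) < e
                                          & ~ slice c i x w])
    & exists j k : I, [/\ j <> i, k <> i, j <> k,
        setdist v (polycyl (c j)) = setdist v (polycyl (c i))
      & setdist v (polycyl (c k)) = setdist v (polycyl (c i))]].

End Polycyl.

From HB Require Import structures.
From mathcomp Require Import all_boot all_order all_algebra.
From mathcomp Require Import all_classical all_reals.
From mathcomp Require Import ring lra.
Set Implicit Arguments. Unset Strict Implicit. Unset Printing Implicit Defensive.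
Import Order.TTheory GRing.Theory Num.Theory.
Local Open Scope ring_scope.
Local Open Scope classical_set_scope.

(* The cores of the polycylinders of a packing are pairwise at distance at
   least 2, since otherwise the midpoint of a short segment joining two cores
   would lie in the interior of both polycylinders.  At a vertex v of d_x,
   the polycylinders C_i, C_j, C_k are equidistant from v; if |v - x| were
   less than 2/sqrt 3 > 1, then v would be at distance less than 2/sqrt 3 - 1
   from C_i, hence from C_j and C_k, so the three cores would all meet the
   open ball of radius 2/sqrt 3 about v.  Three points pairwise at distance
   at least 2 cannot fit in such a ball, because the sum of their squared
   pairwise distances is at most three times the sum of their squared
   distances to v. *)

Section EuclideanNorm.
Variables (R : realType) (n : nat).
Local Notation V := 'rV[R]_(n.+2).
Implicit Types (a b u v w : V) (k l : R).

Definition sqenorm v : R := \sum_i v ord0 i ^+ 2.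
Definition edot a b : R := \sum_i a ord0 i * b ord0 i.

Lemma sqenorm_ge0 v : 0 <= sqenorm v.
Proof. by apply: sumr_ge0 => i _; rewrite sqr_ge0. Qed.

Lemma enorm_ge0 v : 0 <= enorm v.
Proof. exact: sqrtr_ge0. Qed.

Lemma sqr_enorm v : enorm v ^+ 2 = sqenorm v.
Proof. by rewrite sqr_sqrtr // sqenorm_ge0. Qed.

Lemma sqenormZB k l a b :
  sqenorm (k *: a - l *: b)
    = k ^+ 2 * sqenorm a + l ^+ 2 * sqenorm b - 2 * k * l * edot a b.
Proof.
rewrite /sqenorm /edot !mulr_sumr -big_split -sumrB /=.
by apply: eq_bigr => i _; rewrite !mxE; ring.
Qed.

Lemma enormZ k v : enorm (k *: v) = `|k| * enorm v.
Proof.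
rewrite /enorm -!/(sqenorm _) -sqrtr_sqr -sqrtrM ?sqr_ge0 //; congr Num.sqrt.
by rewrite /sqenorm mulr_sumr; apply: eq_bigr => i _; rewrite mxE exprMn.
Qed.

Lemma enorm0 : enorm (0 : V) = 0.
Proof. by rewrite -(scale0r (0 : V)) enormZ normr0 mul0r. Qed.

Lemma edotC a b : edot a b = edot b a.
Proof. by apply: eq_bigr => i _; rewrite mulrC. Qed.

Lemma enorm_eq0_edot a b : enorm a = 0 -> edot a b = 0.
Proof.
move=> a0; have : sqenorm a = 0 by rewrite -sqr_enorm a0 expr0n.
move/eqP; rewrite psumr_eq0 => [/allP a_eq0|i _]; last exact: sqr_ge0.
apply: big1 => i _; have /implyP := a_eq0 i (mem_index_enum i).
by rewrite sqrf_eq0 => /(_ isT) /eqP ->; rewrite mul0r.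
Qed.

(* The expansion of |(|b|) a - (|a|) b|^2 equals 2 |a| |b| (|a| |b| - a.b). *)
Lemma edot_le a b : edot a b <= enorm a * enorm b.
Proof.
have [a0|a0] := eqVneq (enorm a) 0; first by rewrite enorm_eq0_edot // a0 mul0r.
have [b0|b0] := eqVneq (enorm b) 0.
  by rewrite edotC enorm_eq0_edot // b0 mulr0.
have ab_gt0 : 0 < enorm a * enorm b by rewrite mulr_gt0 // lt0r enorm_ge0 ?a0 ?b0.
have := sqenorm_ge0 (enorm b *: a - enorm a *: b).
rewrite sqenormZB -!sqr_enorm; nra.
Qed.

Lemma enormD u v : enorm (u + v) <= enorm u + enorm v.
Proof.
rewrite -(ler_pXn2r (_ : 0 < 2)%N) ?nnegrE ?addr_ge0 ?enorm_ge0 // sqr_enorm.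
have := sqenormZB 1 (-1) u v; rewrite scale1r scaleN1r opprK => ->.
have := edot_le u v; rewrite -!sqr_enorm; nra.
Qed.

Lemma edistD u v w : enorm (u - w) <= enorm (u - v) + enorm (v - w).
Proof. by have := enormD (u - v) (v - w); rewrite addrA subrK. Qed.

(* The sum of the squared pairwise distances of p, q, r is
   3 (|v-p|^2 + |v-q|^2 + |v-r|^2) - |p + q + r - 3 v|^2. *)
Lemma sqenorm_pairwise_le p q r v :
  sqenorm (p - q) + sqenorm (q - r) + sqenorm (p - r)
    <= 3 * (sqenorm (v - p) + sqenorm (v - q) + sqenorm (v - r)).
Proof.
rewrite /sqenorm -!big_split /= mulr_sumr; apply: ler_sum => i _; rewrite !mxE.
have := sqr_ge0 (p ord0 i + q ord0 i + r ord0 i - 3 * v ord0 i); nra.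
Qed.

Lemma separated_triple_sqdist p q r v :
  2 <= enorm (p - q) -> 2 <= enorm (q - r) -> 2 <= enorm (p - r) ->
  4 <= enorm (v - p) ^+ 2 + enorm (v - q) ^+ 2 + enorm (v - r) ^+ 2.
Proof.
move=> pq qr pr; have := sqenorm_pairwise_le p q r v; rewrite -!sqr_enorm.
have := enorm_ge0 (p - q); have := enorm_ge0 (q - r); have := enorm_ge0 (p - r).
nra.
Qed.

End EuclideanNorm.

Section Polycylinders.
Variables (R : realType) (n : nat).
Local Notation V := 'rV[R]_(n.+2).
Implicit Types (p v y z : V) (A : set V) (c : core R n).

Lemma setdist_le A y z : A z -> setdist y A <= enorm (y - z).
Proof.
move=> Az; apply: ge_inf; last by exists z.
by exists 0 => _ [w _ <-]; exact: enorm_ge0.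
Qed.

Lemma setdist_lt A y r : A !=set0 -> setdist y A < r ->
  exists2 z, A z & enorm (y - z) < r.
Proof.
move=> [z Az] /inf_lt [|_ [w Aw <-] lt_r]; first by exists (enorm (y - z)), z.
by exists w.
Qed.

Lemma affine_set_polycyl c : affine_set c `<=` polycyl c.
Proof.
by move=> y Ay; rewrite /polycyl /= (le_trans (setdist_le _ Ay)) // subrr enorm0.
Qed.

Lemma affine_set_cpt c : affine_set c (cpt c).
Proof. by exists 0; rewrite mul0mx addr0. Qed.

Lemma polycyl_neq0 c : polycyl c !=set0.
Proof. by exists (cpt c); apply/affine_set_polycyl/affine_set_cpt. Qed.

Lemma setdist_polycyl_lt c v r : setdist v (polycyl c) < r ->
  exists2 p, affine_set c p & enorm (v - p) < r + 1.
Proof.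
move=> /(setdist_lt (polycyl_neq0 c)) [z Cz vz].
have : setdist z (affine_set c) < 1 + (r - enorm (v - z)).
  by apply: le_lt_trans Cz _; lra.
move=> /(setdist_lt (ex_intro _ _ (affine_set_cpt c))) [p Ap zp].
by exists p => //; apply: le_lt_trans (edistD v z p) _; lra.
Qed.

Lemma setdist_polycyl_le c x v : affine_set c x ->
  setdist v (polycyl c) <= Num.max (enorm (v - x)) 1 - 1.
Proof.
move=> Ax; set T := enorm (v - x); have [T_le1|T_gt1] := leP T 1.
  have Cv : polycyl c v by apply: le_trans (setdist_le _ Ax) _.
  by rewrite subrr (le_trans (setdist_le _ Cv)) // subrr enorm0.
have T_neq0 : T != 0 by rewrite gt_eqF // (lt_trans ltr01).
pose z := x + T^-1 *: (v - x).
have Cz : polycyl c z.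
  apply: le_trans (setdist_le _ Ax) _.
  by rewrite /z addrC addKr enormZ ger0_norm ?invr_ge0 ?enorm_ge0 // mulVf.
apply: le_trans (setdist_le _ Cz) _.
have -> : v - z = (1 - T^-1) *: (v - x) by rewrite /z scalerBl scale1r opprD addrA.
have : T^-1 <= 1 by rewrite invf_le1 ?ltW // (lt_trans ltr01).
by move=> Tinv_le1; rewrite enormZ ger0_norm ?subr_ge0 // mulrBl mul1r mulVf.
Qed.

Lemma einterior_polycyl c p y : affine_set c p -> enorm (y - p) < 1 ->
  einterior (polycyl c) y.
Proof.
move=> Ap yp; exists (1 - enorm (y - p)); first by rewrite subr_gt0.
move=> w wy; apply: le_trans (setdist_le _ Ap) _.
by have := edistD w y p; lra.
Qed.

Lemma packing_core_sep (I : Type) (c : I -> core R n) j k p q :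
  packing c -> j <> k -> affine_set (c j) p -> affine_set (c k) q ->
  2 <= enorm (p - q).
Proof.
move=> [_ disj] jk Ap Aq; rewrite leNgt; apply/negP => pq_lt2.
pose m := 2^-1 *: (p + q).
have half_pq : enorm (p - q) / 2 < 1 by rewrite ltr_pdivrMr // mul1r.
have mp : enorm (m - p) = enorm (p - q) / 2.
  have -> : m - p = - 2^-1 *: (p - q) by apply/rowP => i; rewrite !mxE; field.
  by rewrite enormZ normrN ger0_norm ?invr_ge0 ?ler0n // mulrC.
have mq : enorm (m - q) = enorm (p - q) / 2.
  have -> : m - q = 2^-1 *: (p - q) by apply/rowP => i; rewrite !mxE; field.
  by rewrite enormZ ger0_norm ?invr_ge0 ?ler0n // mulrC.
have : (einterior (polycyl (c j)) `&` einterior (polycyl (c k))) m.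
  by split; [apply: (einterior_polycyl Ap) | apply: (einterior_polycyl Aq)];
    rewrite ?mp ?mq.
by rewrite disj.
Qed.

End Polycylinders.

Lemma sqr_two_div_sqrt3 (R : realType) : (2 / Num.sqrt 3 : R) ^+ 2 = 4 / 3.
Proof.
have s3 : Num.sqrt 3 != 0 :> R by rewrite sqrtr_eq0 -ltNge ltr0n.
by rewrite exprMn exprVn sqr_sqrtr ?ler0n //; field.
Qed.

Theorem mainTheorem5 (R : realType) (n : nat) (I : Type) (c : I -> core R n)
  (hpack : packing c) (i : I) (x : 'rV[R]_(n.+2)) (hx : affine_set (c i) x)
  (v : 'rV[R]_(n.+2)) (hv : slice_vertex c i x v) :
  2 / Num.sqrt 3 <= enorm (v - x).
Proof.
move: hv => [_ _ [j [k [ji ki jk vj vk]]]].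
set b := 2 / Num.sqrt 3; have b2 := sqr_two_div_sqrt3 R; rewrite -/b in b2.
have b_gt0 : 0 < b by rewrite divr_gt0 ?sqrtr_gt0 ?ltr0n.
have b_gt1 : 1 < b by nra.
rewrite leNgt; apply/negP => vx_lt_b.
have vi_lt : setdist v (polycyl (c i)) < b - 1.
  apply: le_lt_trans (setdist_polycyl_le v hx) _.
  by rewrite ltrBlDr subrK gt_max vx_lt_b.
have [pj Aj vpj] : exists2 p, affine_set (c j) p & enorm (v - p) < b.
  by rewrite -[b](subrK 1); apply: setdist_polycyl_lt; rewrite vj.
have [pk Ak vpk] : exists2 p, affine_set (c k) p & enorm (v - p) < b.
  by rewrite -[b](subrK 1); apply: setdist_polycyl_lt; rewrite vk.
have := separated_triple_sqdist v (packing_core_sep hpack jk Aj Ak)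
  (packing_core_sep hpack ki Ak hx) (packing_core_sep hpack ji Aj hx).
have := enorm_ge0 (v - pj); have := enorm_ge0 (v - pk); have := enorm_ge0 (v - x).
nra.
Qed.
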